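(* Fix $n\ge1$. Conditionally on the blocks $\mathbf{B}_0,\mathbf{B}_1,\dots$, let $J_{n,0},\dots,J_{n,n-1},\Delta'_{n,0},\dots,\Delta'_{n,n-1}$ be independent random variables with $J_{n,k}\sim\mathrm{Be}(W_k/S_k)$ (so $J_{n,0}=1$) and $\Delta'_{n,k}$ distributed as $D'_k(H'_k,U_k)$ with $U_k$ chosen in $B_k$ according to $P'_k$, and put $Y_{n,k}=J_{n,k}\Delta'_{n,k}$. Then the insertion depth $\Delta_n$ of the random recursive metric space $\mathbf{G}_n$ has the same distribution as $\sum_{k=0}^{n-1}Y_{n,k}$.
   Context: A block is a random element $\mathbf{B}=(B,D',H',P',W)$ of $\mathcal{X}^\bullet\times\mathbb{R}$, where $\mathcal{X}^\bullet$ is the Polish space (with the hooked Gromov–Prokhorov metric) of hook-preserving-isometry classes of hooked complete separable metric probability spaces $(B,D',H',P')$ with $P'$ a Borel probability measure of full support and $H'\in B$ a distinguished point called the hook; $W\ge 0$ is the weight. The blocks $\mathbf{B}_n=(B_n,D'_n,H'_n,P'_n,W_n)$, $n\ge1$, are i.i.d., with $\mathbb{E}[W_n]>0$; $\mathbf{B}_0=(B_0,D'_0,H,P'_0,W_0)$ is independent of them, may have a different distribution, and satisfies $W_0>0$. Set $\mathbf{G}_0=\mathbf{B}_0$, i.e. $G_0=B_0$, $D_0=D'_0$, $P_0=P'_0$, $S_0=W_0$; the point $H$ is the master hook. For $n\ge0$, given everything so far, choose a latch $v_{n+1}\in G_n$ according to $P_n$, and form $G_{n+1}$ by gluing $B_{n+1}$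 to $G_n$ by identifying $H'_{n+1}$ with $v_{n+1}$, with $D_{n+1}$ the glued metric, $S_{n+1}=S_n+W_{n+1}$ (so $S_k=\sum_{i=0}^k W_i$), and $P_{n+1}=\frac{S_n}{S_{n+1}}\widehat{P_n}+\frac{W_{n+1}}{S_{n+1}}\widehat{P'_{n+1}}$, where $\widehat{P_n}(A)=P_n(A\cap G_n)$ and $\widehat{P'_{n+1}}(A)=P'_{n+1}(A\cap B_{n+1})$. The insertion depth is $\Delta_n=D_n(H,v_n)$. *)

From HB Require Import structures.
From mathcomp Require Import all_boot all_order all_algebra.
From mathcomp Require Import all_classical all_reals all_analysis.
Set Implicit Arguments. Unset Strict Implicit. Unset Printing Implicit Defensive.
Import Order.TTheory GRing.Theory Num.Theory.
Local Open Scope classical_set_scope.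
Local Open Scope ring_scope.

Section RRMS.
Context {R : realType} {d : nat -> measure_display} (T : forall k, measurableType (d k)).

(* A point of the glued space G_m is represented by a pair (k, x) with x in
   the block B_k (k <= m); the hook of B_k (k >= 1) is identified with the
   latch v_k.  The master hook H is the hook of B_0. *)
Definition pt := {k : nat & T k}.

Variables (D' : forall k, T k -> T k -> R) (h : forall k, T k).

(* Glued metric restricted to distances from the master hook H = h 0:
   for y in B_k (k >= 1) glued at latch v_k, D(H, y) = D(H, v_k) + D'_k(H'_k, y);
   for y in B_0, D(H, y) = D'_0(H, y).  [fuel] only ensures termination; it is
   large enough whenever latches v_k lie in blocks of index < k. *)
Fixpoint depthF (v : nat -> pt) (fuel : nat) (p : pt) : R :=
  let k := projT1 p in
  match fuel with
  | 0 => D' (h k) (projT2 p)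
  | f.+1 => D' (h k) (projT2 p) + (if k == 0%N then 0 else depthF v f (v k))
  end.

Definition depth (v : nat -> pt) (p : pt) : R := depthF v (projT1 p) p.

Definition Ssum (W : nat -> R) (m : nat) : R := \sum_(i < m.+1) W i.

Variables (P' : forall k, probability (T k) R) (W : nat -> R).

(* Integral of g : pt -> \bar R against the measure P_m on G_m, i.e. the
   mixture sum_{k<=m} (W_k/S_m) P'_k (pushed onto G_m). *)
Definition mixInt (m : nat) (g : pt -> \bar R) : \bar R :=
  (\sum_(k < m.+1) ((W k / Ssum W m)%:E * \int[P' k]_x g (existT _ (k : nat) x)))%E.

Definition upd (v : nat -> pt) (j : nat) (p : pt) : nat -> pt :=
  fun i => if i == j then p else v i.

(* Expectation of a functional F of the latch sequence, where, for
   m = m0, ..., m0 + r - 1, the latch v_{m+1} is drawn according to P_m given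
   everything so far (sequential / Ionescu-Tulcea construction). *)
Fixpoint latchInt (r m : nat) (F : (nat -> pt) -> \bar R) (v : nat -> pt) : \bar R :=
  match r with
  | 0 => F v
  | r'.+1 => mixInt m (fun p => latchInt r' m.+1 F (upd v m.+1 p))
  end.

(* Initial (irrelevant) value of the latch sequence. *)
Definition v_init : nat -> pt := fun _ => existT _ 0%N (h 0%N).

Definition insertion_depth_prob (n : nat) (A : set R) : \bar R :=
  latchInt n 0 (fun v => (\1_A (depth v (v n)))%:E) v_init.

End RRMS.

(* Mutual independence of the 2n real random variables J_0..J_{n-1},
   X_0..X_{n-1}: product rule for all events (taking setT recovers
   all subfamilies). *)
Definition mutually_independent2 {R : realType} {dO : measure_display}
  {O : measurableType dO} (P : probability O R) (n : nat) (J X : nat -> O -> R) :=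
  forall A B : nat -> set R, (forall k, measurable (A k)) -> (forall k, measurable (B k)) ->
  P (\bigcap_(k in [set k | (k < n)%N]) (J k @^-1` A k `&` X k @^-1` B k)) =
  (\prod_(k < n) (P (J k @^-1` A k) * P (X k @^-1` B k)))%E.

(* Both sides equal the iterated Bernoulli convolution
     bconv_0 (bconv_1 (... (bconv_(n-1) 1_A))) 0,
   where p_k = W_k / S_k and
     bconv_k f c = (1 - p_k) f c + p_k E f (c + D'_k(H'_k, U_k)).
   For the sum Z_n = sum_k J_k Y_k, the pair (J_j, Y_j) is independent of Z_j,
   so law(Z_(j+1)) = (1 - p_j) law(Z_j) + p_j law(Z_j) * law(Y_j); that
   independence is carried along the same induction on j, via uniqueness of
   product measures.
   For the insertion depth, the latch v_(m+1) falls in block k <= m with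
   probability W_k / S_m, at depth Delta_k + D'_k(H'_k, U).  Integrating out
   the latches one at a time, the weights
   W_k / S_(m+1) = (W_k / S_m)(1 - p_(m+1))
   left on the older latches recombine with the new one into bconv_(m+1). *)

From HB Require Import structures.
From mathcomp Require Import all_boot all_order all_algebra.
From mathcomp Require Import all_classical all_reals all_analysis.
From mathcomp Require Import measurable_realfun.
From mathcomp Require Import ring.
Import Order.TTheory GRing.Theory Num.Theory.
Local Open Scope classical_set_scope.
Local Open Scope ring_scope.

Section law.
Context {R : realType} {d : measure_display} {T : measurableType d}.
Variable P : probability T R.

Definition law {f : T -> R} (mf : measurable_fun setT f) : probability R R :=
  distribution P
    (HB.pack f (isMeasurableFun.Build _ _ _ _ f mf) : {mfun T >-> R}).

Lemma ge0_integral_law (f : T -> R) (mf : measurable_fun setT f)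
    (g : R -> \bar R) :
  measurable_fun setT g -> (forall x, 0 <= g x)%E ->
  (\int[law mf]_x g x = \int[P]_y g (f y))%E.
Proof. by move=> mg g0; exact: (ge0_integral_distribution _ mg g0). Qed.

End law.

Section joint_law.
Context {R : realType} {d d1 d2 : measure_display} {O : measurableType d}
  {T1 : measurableType d1} {T2 : measurableType d2}.
Variables (P : probability O R) (X : O -> T1) (Y : O -> T2) (E : set O).
Hypotheses (mX : measurable_fun setT X) (mY : measurable_fun setT Y).
Hypothesis mE : measurable E.
Local Open Scope ereal_scope.

Let XY w := (X w, Y w).

Let mXY S : measurable S -> measurable (XY @^-1` S `&` E).
Proof.
move=> mS; apply: measurableI => //.
by rewrite -[X in measurable X]setTI; exact: (measurable_fun_pair mX mY).
Qed.

Definition joint_law_on (S : set (T1 * T2)) := P (XY @^-1` S `&` E).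

Let joint_law_on0 : joint_law_on set0 = 0.
Proof. by rewrite /joint_law_on preimage_set0 set0I measure0. Qed.

Let joint_law_on_ge0 S : 0 <= joint_law_on S.
Proof. exact: measure_ge0. Qed.

Let joint_law_on_sigma_additive : semi_sigma_additive joint_law_on.
Proof.
move=> F mF tF mUF; rewrite /joint_law_on preimage_bigcup setI_bigcupl.
apply: measure_semi_sigma_additive => [n||]; first exact: mXY.
- apply/trivIsetP => i j _ _ ij; rewrite setIACA -preimage_setI.
  by move/trivIsetP : tF => /(_ _ _ _ _ ij) ->//; rewrite preimage_set0 set0I.
- by rewrite -setI_bigcupl -preimage_bigcup; exact: mXY.
Qed.

HB.instance Definition _ := isMeasure.Build _ _ _ joint_law_on
  joint_law_on0 joint_law_on_ge0 joint_law_on_sigma_additive.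

(* Uniqueness of the product measure, applied to the joint law of [(X, Y)]
   restricted to [E]. *)
Lemma joint_law_on_product (mu1 : probability T1 R) (mu2 : probability T2 R)
    (c : \bar R) : 0 <= c -> c \is a fin_num ->
  (forall C B, measurable C -> measurable B ->
     P (X @^-1` C `&` Y @^-1` B `&` E) = c * (mu1 C * mu2 B)) ->
  forall S, measurable S -> P (XY @^-1` S `&` E) = c * (mu1 \x mu2) S.
Proof.
move=> c0 cfin rectE S mS.
have [c_eq0|c_neq0] := eqVneq c 0.
  subst c.
  have PE0 : P E = 0.
    have := rectE setT setT measurableT measurableT.
    by rewrite !preimage_setT !setTI mul0e.
  rewrite mul0e; apply/eqP; rewrite eq_le measure_ge0 andbT -PE0.
  by apply: le_measure; rewrite ?inE //; exact: mXY.
have [r rE] : exists r : R, c = r%:E by exists (fine c); rewrite fineK.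
have r_gt0 : (0 < r)%R by rewrite -lte_fin -rE lt_def c_neq0 c0.
have rV_ge0 : (0 <= r^-1)%R by rewrite invr_ge0 ltW.
pose m := mscale (NngNum rV_ge0) joint_law_on.
have mE' A B : measurable A -> measurable B -> m (A `*` B) = mu1 A * mu2 B.
  move=> mA mB; rewrite /m /mscale /= /joint_law_on.
  rewrite (_ : XY @^-1` (A `*` B) = X @^-1` A `&` Y @^-1` B) //.
  by rewrite rectE // rE muleA -EFinM mulVf ?gt_eqF // mul1e.
rewrite (product_measure_unique (m' := m) mE' mS) /m /mscale /= rE muleA -EFinM.
by rewrite mulfV ?gt_eqF // mul1e.
Qed.

End joint_law.

Section bernoulli_shift.
Context {R : realType}.
Local Open Scope ereal_scope.

Definition shift_integral (nu : probability R R) (f : R -> \bar R) (c : R) :=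
  \int[nu]_y f (c + y)%R.

Definition bconv (p : R) (nu : probability R R) (f : R -> \bar R) (c : R) :=
  (1 - p)%:E * f c + p%:E * shift_integral nu f c.

Variable nu : probability R R.
Implicit Types f g : R -> \bar R.

Let measurable_shift f (c : R) :
  measurable_fun setT f -> measurable_fun setT (fun y : R => f (c + y)%R).
Proof.
by move=> mf; apply: (measurableT_comp mf); exact: measurable_funD.
Qed.

Lemma shift_integral_ge0 f : (forall x, 0 <= f x) ->
  forall c, 0 <= shift_integral nu f c.
Proof. by move=> f0 c; apply: integral_ge0. Qed.

Lemma measurable_shift_integral f : measurable_fun setT f ->
  (forall x, 0 <= f x) -> measurable_fun setT (shift_integral nu f).
Proof.
move=> mf f0.
have mF : measurable_fun setT (fun z : R * R => f (z.1 + z.2)%R).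
  exact: measurableT_comp mf (measurable_funD measurable_fst measurable_snd).
exact: (measurable_fun_fubini_tonelli_F (m2 := nu) _ mF (fun z => f0 _)).
Qed.

Lemma shift_integralD f g : measurable_fun setT f -> measurable_fun setT g ->
  (forall x, 0 <= f x) -> (forall x, 0 <= g x) -> forall c,
  shift_integral nu (fun x => f x + g x) c =
  shift_integral nu f c + shift_integral nu g c.
Proof.
move=> mf mg f0 g0 c.
by apply: ge0_integralD => //; exact: measurable_shift.
Qed.

Lemma shift_integralZ (a : R) f : (0 <= a)%R -> measurable_fun setT f ->
  (forall x, 0 <= f x) -> forall c,
  shift_integral nu (fun x => a%:E * f x) c = a%:E * shift_integral nu f c.
Proof.
move=> a0 mf f0 c.
by rewrite /shift_integral ge0_integralZl ?lee_fin //; exact: measurable_shift.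
Qed.

Variable p : R.
Hypotheses (p_ge0 : (0 <= p)%R) (p_le1 : (p <= 1)%R).

Let q_ge0 : (0 <= 1 - p)%R. Proof. by rewrite subr_ge0. Qed.

Lemma bconv_ge0 f : (forall x, 0 <= f x) -> forall c, 0 <= bconv p nu f c.
Proof.
move=> f0 c; apply: adde_ge0; apply: mule_ge0; rewrite ?lee_fin //.
exact: shift_integral_ge0.
Qed.

Lemma measurable_bconv f : measurable_fun setT f -> (forall x, 0 <= f x) ->
  measurable_fun setT (bconv p nu f).
Proof.
move=> mf f0; apply: emeasurable_funD; apply: measurable_funeM => //.
exact: measurable_shift_integral.
Qed.

(* [m] is the law of [X + J Y] for independent [X ~ lam], [J ~ Be(p)] and
   [Y ~ nu]. *)
Lemma integral_bconv (lam m : probability R R) :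
  (forall C, measurable C -> m C =
     p%:E * (lam \x nu) ((fun z => z.1 + z.2)%R @^-1` C) + (1 - p)%:E * lam C) ->
  forall f, measurable_fun setT f -> (forall x, 0 <= f x) ->
  \int[m]_x f x = \int[lam]_x bconv p nu f x.
Proof.
move=> mE f mf f0.
have madd : measurable_fun setT (fun z : R * R => z.1 + z.2)%R.
  exact: measurable_funD measurable_fst measurable_snd.
pose rho := measure_add (mscale (NngNum p_ge0) (law (lam \x nu) madd))
  (mscale (NngNum q_ge0) lam).
have m_rho A : measurable A -> m A = rho A.
  by move=> mA; rewrite /rho measure_addE; exact: mE.
rewrite (eq_measure_integral rho) => [|A mA _]; last exact: m_rho.
rewrite ge0_integral_measure_add // !ge0_integral_mscale //.
rewrite ge0_integral_law // fubini_tonelli1 /=; last first.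
- by move=> z; exact: f0.
- exact: measurableT_comp mf madd.
have mSI := measurable_shift_integral _ mf f0.
have SI0 := shift_integral_ge0 _ f0.
rewrite /bconv [RHS]ge0_integralD //; last 4 first.
- by move=> x _; apply: mule_ge0; rewrite ?lee_fin.
- exact: measurable_funeM.
- by move=> x _; apply: mule_ge0; rewrite ?lee_fin.
- exact: measurable_funeM.
by rewrite !ge0_integralZl ?lee_fin // addeC.
Qed.

End bernoulli_shift.

Lemma shift_integral_bconv {R : realType} (mu nu : probability R R) (p : R)
    (f : R -> \bar R) : 0 <= p -> p <= 1 ->
  measurable_fun setT f -> (forall x, 0 <= f x)%E -> forall c,
  shift_integral mu (bconv p nu f) c = ((1 - p)%:E * shift_integral mu f c +
    shift_integral mu (fun x => p%:E * shift_integral nu f x) c)%E.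
Proof.
move=> p0 p1 mf f0 c.
have q0 : 0 <= 1 - p by rewrite subr_ge0.
have mSI := measurable_shift_integral nu f mf f0.
rewrite (shift_integralD _ (fun x => (1 - p)%:E * f x)
  (fun x => p%:E * shift_integral nu f x))%E.
- by rewrite (shift_integralZ _ (1 - p) f).
- exact: measurable_funeM mf.
- exact: measurable_funeM mSI.
- by move=> x; apply: mule_ge0; rewrite ?lee_fin.
- by move=> x; apply: mule_ge0; rewrite ?lee_fin //; exact: shift_integral_ge0.
Qed.

Section bconv_chain.
Context {R : realType}.
Variables (p : nat -> R) (nu : nat -> probability R R).
Hypotheses (p_ge0 : forall k, 0 <= p k) (p_le1 : forall k, p k <= 1).
Local Open Scope ereal_scope.

Fixpoint bconv_chain (m r : nat) (f : R -> \bar R) : R -> \bar R :=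
  if r is r'.+1 then bconv (p m) (nu m) (bconv_chain m.+1 r' f) else f.

Lemma bconv_chainSr m r f :
  bconv_chain m r.+1 f = bconv_chain m r (bconv (p (m + r)) (nu (m + r)) f).
Proof.
elim: r m => [|r IH] m; first by rewrite addn0.
by rewrite -[LHS]/(bconv _ _ (bconv_chain m.+1 r.+1 f)) IH addSnnS.
Qed.

Lemma bconv_chain_ge0 m r f : (forall x, 0 <= f x) ->
  forall x, 0 <= bconv_chain m r f x.
Proof. by elim: r m => [|r IH] m f0 //=; apply: bconv_ge0 => //; exact: IH. Qed.

Lemma measurable_bconv_chain m r f : measurable_fun setT f ->
  (forall x, 0 <= f x) -> measurable_fun setT (bconv_chain m r f).
Proof.
elim: r m => [|r IH] m mf f0 //=.
by apply: measurable_bconv => //; [exact: IH | exact: bconv_chain_ge0].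
Qed.

End bconv_chain.

Section probability_split.
Context {R : realType} {d : measure_display} {O : measurableType d}.
Variable P : probability O R.
Local Open Scope ereal_scope.

Lemma probability_split (G0 G1 X : set O) :
  measurable G0 -> measurable G1 -> measurable X ->
  G0 `&` G1 = set0 -> P G0 + P G1 = 1 ->
  P X = P (X `&` G0) + P (X `&` G1).
Proof.
move=> mG0 mG1 mX G01 PG01.
have mG : measurable (G0 `|` G1) by exact: measurableU.
have PG : P (~` (G0 `|` G1)) = 0.
  by rewrite probability_setC // measureU // PG01 subee.
have -> : P X = P (X `&` (G0 `|` G1)) + P (X `&` ~` (G0 `|` G1)).
  rewrite -measureU.
  - by rewrite -setIUr setUv setIT.
  - exact: measurableI.
  - by apply: measurableI => //; exact: measurableC.
  - by rewrite setIACA setICr setI0.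
have -> : P (X `&` ~` (G0 `|` G1)) = 0.
  apply/eqP; rewrite eq_le measure_ge0 andbT -PG le_measure ?inE //.
  - by apply: measurableI => //; exact: measurableC.
  - exact: measurableC.
rewrite adde0 setIUr measureU //; try exact: measurableI.
by rewrite setIACA G01 setI0.
Qed.

End probability_split.

Section bernoulli_sum.
Context {R : realType} {dO : measure_display} {O : measurableType dO}.
Variables (P : probability O R) (n : nat) (J Y : nat -> O -> R).
Variables (p : nat -> R) (nu : nat -> probability R R).
Hypotheses (mJ : forall k, measurable_fun setT (J k))
  (mY : forall k, measurable_fun setT (Y k)).
Hypothesis indep : mutually_independent2 P n J Y.
Hypotheses (p_ge0 : forall k, 0 <= p k) (p_le1 : forall k, p k <= 1).
Hypothesis PJ1 : forall k, (k < n)%N -> P (J k @^-1` [set 1]) = (p k)%:E.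
Hypothesis PJ0 : forall k, (k < n)%N -> P (J k @^-1` [set 0]) = (1 - p k)%:E.
Hypothesis PY : forall k, (k < n)%N ->
  forall B, measurable B -> P (Y k @^-1` B) = nu k B.
Local Open Scope ereal_scope.

Definition psum (j : nat) (w : O) : R := \sum_(k < j) J k w * Y k w.

Lemma psumS j w : psum j.+1 w = (psum j w + J j w * Y j w)%R.
Proof. by rewrite /psum big_ord_recr. Qed.

Lemma measurable_psum j : measurable_fun setT (psum j).
Proof.
elim: j => [|j IH].
  rewrite (_ : psum 0 = cst 0%R); first exact: measurable_cst.
  by apply/funext => w; rewrite /psum big_ord0.
rewrite (_ : psum j.+1 = psum j \+ J j \* Y j)%R; last exact/funext/psumS.
by apply: measurable_funD => //; exact: measurable_funM.
Qed.

Let measurable_preimage {f : O -> R} {S : set R} :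
  measurable_fun setT f -> measurable S -> measurable (f @^-1` S).
Proof. by move=> mf mS; rewrite -[X in measurable X]setTI; exact: mf. Qed.

Definition rect (A B : nat -> set R) : set O :=
  \bigcap_(k in [set k | (k < n)%N]) (J k @^-1` A k `&` Y k @^-1` B k).

Lemma measurable_rect A B : (forall k, measurable (A k)) ->
  (forall k, measurable (B k)) -> measurable (rect A B).
Proof.
move=> mA mB; apply: bigcap_measurableType => k _.
by apply: measurableI; exact: measurable_preimage.
Qed.

Lemma rect_setT : rect (fun=> setT) (fun=> setT) = setT.
Proof. by apply/seteqP; split. Qed.

Lemma rect_with A B j S S' : (j < n)%N -> A j = setT -> B j = setT ->
  rect [eta A with j |-> S] [eta B with j |-> S'] =
  rect A B `&` J j @^-1` S `&` Y j @^-1` S'.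
Proof.
move=> jn Aj Bj; apply/seteqP; split => w /=.
- move=> AB'w; split; last by have [] := AB'w j jn; rewrite /= eqxx.
  split; last by have [] := AB'w j jn; rewrite /= eqxx.
  move=> k kn; have [] := AB'w k kn; rewrite /=.
  by case: eqP => [->|//]; rewrite Aj Bj.
- move=> [[ABw Sw] S'w] k kn; have [Aw Bw] := ABw k kn; rewrite /=.
  by case: eqP => [->|].
Qed.

Lemma probability_rect_with A B j S S' : (j < n)%N -> A j = setT -> B j = setT ->
  (forall k, measurable (A k)) -> (forall k, measurable (B k)) ->
  measurable S -> measurable S' ->
  P (rect [eta A with j |-> S] [eta B with j |-> S']) =
  P (J j @^-1` S) * P (Y j @^-1` S') * P (rect A B).
Proof.
move=> jn Aj Bj mA mB mS mS'.
have mAS k : measurable ([eta A with j |-> S] k) by rewrite /=; case: eqP.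
have mBS k : measurable ([eta B with j |-> S'] k) by rewrite /=; case: eqP.
rewrite /rect !indep // (bigD1 (Ordinal jn)) //=.
rewrite [X in _ = _ * X](bigD1 (Ordinal jn)) //=.
rewrite !eqxx Aj Bj !preimage_setT.
rewrite probability_setT mule1 mul1e; congr (_ * _).
by apply: eq_bigr => k /negPf kj; rewrite /= -val_eqE /= in kj; rewrite kj.
Qed.

Definition psum_indep_tail (j : nat) := forall A B,
  (forall k, measurable (A k)) -> (forall k, measurable (B k)) ->
  (forall k, (k < j)%N -> A k = setT /\ B k = setT) ->
  forall C, measurable C ->
  P (psum j @^-1` C `&` rect A B) = P (psum j @^-1` C) * P (rect A B).

Local Notation add := (fun z : R * R => z.1 + z.2)%R.

Lemma psum_indep_tail0 : psum_indep_tail 0.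
Proof.
move=> A B mA mB _ C mC.
have [C0|nC0] := pselect (C 0%R).
- rewrite (_ : psum 0 @^-1` C = setT) ?setTI ?probability_setT ?mul1e //.
  by apply/seteqP; split => // w _; rewrite /preimage /= /psum big_ord0.
- rewrite (_ : psum 0 @^-1` C = set0) ?set0I ?measure0 ?mul0e //.
  by apply/seteqP; split => // w; rewrite /preimage /= /psum big_ord0.
Qed.

Section psum_step.
Variables (j : nat) (A B : nat -> set R) (C : set R).
Hypotheses (jn : (j < n)%N) (IH : psum_indep_tail j).
Hypotheses (mA : forall k, measurable (A k)) (mB : forall k, measurable (B k)).
Hypothesis mC : measurable C.
Hypothesis AB_triv : forall k, (k <= j)%N -> A k = setT /\ B k = setT.

Let Aj : A j = setT. Proof. by have [] := AB_triv j (leqnn j). Qed.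
Let Bj : B j = setT. Proof. by have [] := AB_triv j (leqnn j). Qed.

Let with_measurable (F : nat -> set R) S : (forall k, measurable (F k)) ->
  measurable S -> forall k, measurable ([eta F with j |-> S] k).
Proof. by move=> mF mS k /=; case: eqP. Qed.

Let with_triv S S' k : (k < j)%N ->
  [eta A with j |-> S] k = setT /\ [eta B with j |-> S'] k = setT.
Proof. by move=> kj; rewrite /= ltn_eqF //; exact: AB_triv (ltnW kj). Qed.

Lemma psum_step_J0 : P (psum j.+1 @^-1` C `&` rect A B `&` J j @^-1` [set 0%R]) =
  (1 - p j)%:E * P (rect A B) * P (psum j @^-1` C).
Proof.
have -> : psum j.+1 @^-1` C `&` rect A B `&` J j @^-1` [set 0%R] =
    psum j @^-1` C `&` rect [eta A with j |-> [set 0%R]] [eta B with j |-> setT].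
  rewrite rect_with // preimage_setT setIT setIA.
  apply/seteqP; split => w /= [[Cw ABw] J0w]; (split; [split|]) => //;
    by move: Cw; rewrite psumS J0w mul0r addr0.
rewrite IH //; try exact: with_measurable; try exact: with_triv.
rewrite probability_rect_with // preimage_setT probability_setT PJ0 // mule1.
by rewrite muleC.
Qed.

Lemma psum_step_J1 : P (psum j.+1 @^-1` C `&` rect A B `&` J j @^-1` [set 1%R]) =
  (p j)%:E * P (rect A B) * (law P (measurable_psum j) \x nu j) (add @^-1` C).
Proof.
set E1 := rect [eta A with j |-> [set 1%R]] [eta B with j |-> setT].
have mE1 : measurable E1 by apply: measurable_rect; exact: with_measurable.
have -> : psum j.+1 @^-1` C `&` rect A B `&` J j @^-1` [set 1%R] =
    (fun w => (psum j w, Y j w)) @^-1` (add @^-1` C) `&` E1.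
  rewrite /E1 rect_with // preimage_setT setIT setIA.
  apply/seteqP; split => w /= [[Cw ABw] J1w]; (split; [split|]) => //;
    by move: Cw; rewrite psumS J1w mul1r.
apply: joint_law_on_product.
- exact: measurable_psum.
- exact: mY.
- exact: mE1.
- by apply: mule_ge0; rewrite ?lee_fin // measure_ge0.
- by rewrite fin_numM // fin_num_measure //; exact: measurable_rect.
- move=> C' B' mC' mB'.
  have -> : psum j @^-1` C' `&` Y j @^-1` B' `&` E1 =
      psum j @^-1` C' `&` rect [eta A with j |-> [set 1%R]] [eta B with j |-> B'].
    rewrite /E1 !rect_with // preimage_setT setIT.
    apply/seteqP; split => w /=.
    - by case=> -[Cw B'w] [ABw J1w].
    - by case=> Cw [[ABw J1w] B'w].
  rewrite IH //; try exact: with_measurable; try exact: with_triv.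
  rewrite probability_rect_with // PJ1 // PY //.
  rewrite muleC -!muleA; congr (_ * _); rewrite muleCA; congr (_ * _).
  exact: muleC.
- by rewrite -[X in measurable X]setTI; exact: measurable_funD.
Qed.

Lemma psum_step : P (psum j.+1 @^-1` C `&` rect A B) = P (rect A B) *
  ((p j)%:E * (law P (measurable_psum j) \x nu j) (add @^-1` C) +
   (1 - p j)%:E * P (psum j @^-1` C)).
Proof.
have mJ1 := measurable_preimage (mJ j) (measurable_set1 1%R).
have mJ0 := measurable_preimage (mJ j) (measurable_set1 0%R).
rewrite (probability_split P _ _ _ mJ1 mJ0) ?psum_step_J1 ?psum_step_J0.
- rewrite [RHS]ge0_muleDr; last 2 first.
  + by apply: mule_ge0; [rewrite lee_fin | exact: measure_ge0].
  + by apply: mule_ge0; [rewrite lee_fin subr_ge0 | exact: measure_ge0].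
  by rewrite !muleA (muleC (P (rect A B)) (p j)%:E) (muleC (P (rect A B))).
- apply: measurableI; last exact: measurable_rect.
  by apply: measurable_preimage => //; exact: measurable_psum.
- by apply/seteqP; split => // w /= [-> /eqP]; rewrite oner_eq0.
- by rewrite PJ1 // PJ0 // -EFinD addrC subrK.
Qed.

End psum_step.

Lemma psum_indep_tailS j : (j < n)%N -> psum_indep_tail j -> psum_indep_tail j.+1.
Proof.
move=> jn IH A B mA mB triv C mC.
have trivj k : (k <= j)%N -> A k = setT /\ B k = setT by move=> kj; exact: triv.
rewrite (psum_step _ _ _ _ jn IH mA mB mC trivj).
have := psum_step _ _ _ _ jn IH (fun=> measurableT) (fun=> measurableT) mC
  (fun _ _ => conj erefl erefl).
by rewrite rect_setT setIT probability_setT mul1e => <-; rewrite muleC.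
Qed.

Lemma psum_indep_tail_le j : (j <= n)%N -> psum_indep_tail j.
Proof.
elim: j => [_|j IH jn]; first exact: psum_indep_tail0.
by apply: psum_indep_tailS => //; apply: IH; exact: ltnW.
Qed.

Lemma law_psumS j : (j < n)%N -> forall C, measurable C ->
  law P (measurable_psum j.+1) C =
  (p j)%:E * (law P (measurable_psum j) \x nu j) (add @^-1` C) +
  (1 - p j)%:E * law P (measurable_psum j) C.
Proof.
move=> jn C mC.
have := psum_step _ _ _ _ jn (psum_indep_tail_le _ (ltnW jn))
  (fun=> measurableT) (fun=> measurableT) mC (fun _ _ => conj erefl erefl).
by rewrite rect_setT setIT probability_setT mul1e.
Qed.

Lemma integral_law_psum j : (j <= n)%N ->
  forall f, measurable_fun setT f -> (forall x, 0 <= f x) ->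
  \int[law P (measurable_psum j)]_x f x = bconv_chain p nu 0 j f 0%R.
Proof.
elim: j => [_|j IH jn] f mf f0.
  rewrite ge0_integral_law //= (eq_integral (fun=> f 0%R)); last first.
    by move=> w _; rewrite /psum big_ord0.
  by rewrite integral_cst // [X in _ * X]probability_setT mule1.
rewrite (integral_bconv _ _ (p_ge0 j) (p_le1 j) _ _ (law_psumS _ jn)) //.
rewrite IH ?(ltnW jn) //; last 2 first.
- exact: measurable_bconv.
- exact: bconv_ge0.
by rewrite bconv_chainSr add0n.
Qed.

Lemma probability_psum_in (A : set R) : measurable A ->
  P [set w | psum n w \in A] = bconv_chain p nu 0 n (fun c => (\1_A c)%:E) 0%R.
Proof.
move=> mA; rewrite -integral_law_psum //; last first.
  by apply/measurable_EFinP; exact: measurable_indic.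
rewrite integral_indic // setIT.
by congr (P _); apply/seteqP; split => w; rewrite /= inE.
Qed.

End bernoulli_sum.

Section insertion_depth.
Context {R : realType} {d : nat -> measure_display}.
Variables (T : forall k, measurableType (d k)) (D' : forall k, T k -> T k -> R).
Variables (h : forall k, T k) (P' : forall k, probability (T k) R) (W : nat -> R).
Hypothesis mD' : forall k, measurable_fun setT (D' k (h k)).
Hypotheses (W_ge0 : forall k, 0 <= W k) (W0_gt0 : 0 < W 0%N).

Local Notation depth := (depth D' h).
Local Notation depthF := (depthF D' h).
Local Notation nu k := (law (P' k) (mD' k)).

Definition latches_below (v : nat -> pt T) := forall k, (projT1 (v k.+1) <= k)%N.

(* Latch [0] is read as the master hook; [v 0] itself is a dummy value. *)
Definition latch_depth (v : nat -> pt T) (k : nat) : R :=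
  if k is 0 then 0 else depth v (v k).

Section latches.
Variable v : nat -> pt T.
Hypothesis v_below : latches_below v.

Lemma depthFS f k x : depthF v f.+1 (existT _ k x) =
  D' k (h k) x + (if k is 0 then 0 else depthF v f (v k)).
Proof. by case: k x. Qed.

Lemma depthF_succ f q : (projT1 q <= f)%N -> depthF v f.+1 q = depthF v f q.
Proof.
elim: f q => [|f IH] [[|k] x] kf //; first by rewrite /= addr0.
rewrite depthFS [RHS]depthFS IH //; exact: leq_trans (v_below k) kf.
Qed.

Lemma depthF_depth f q : (projT1 q <= f)%N -> depthF v f q = depth v q.
Proof.
move=> /subnKC <-; elim: (f - projT1 q)%N => [|i IH]; first by rewrite addn0.
by rewrite addnS depthF_succ ?leq_addr.
Qed.

Lemma depth_existT k x : depth v (existT _ k x) = D' k (h k) x + latch_depth v k.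
Proof.
case: k x => [|k] x; first by rewrite addr0.
by rewrite /depth /= depthF_depth.
Qed.

Lemma depthF_upd m q f r : (projT1 r <= f)%N -> (f <= m)%N ->
  depthF (upd v m.+1 q) f r = depthF v f r.
Proof.
elim: f r => [|f IH] [[|k] x] //= kf fm.
have km : k.+1 != m.+1 by rewrite neq_ltn ltnS (leq_trans kf).
by rewrite /upd (negbTE km) IH // ?(leq_trans (v_below k)) // ltnW.
Qed.

Lemma latch_depth_upd m q k : (k <= m)%N ->
  latch_depth (upd v m.+1 q) k = latch_depth v k.
Proof.
case: k => [//|k] km /=.
have -> : upd v m.+1 q k.+1 = v k.+1 by rewrite /upd ifN // neq_ltn ltnS km.
by rewrite /depth depthF_upd // (leq_trans (v_below k)) // ltnW.
Qed.

Lemma latches_below_upd m q : (projT1 q <= m)%N -> latches_below (upd v m.+1 q).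
Proof. by move=> qm k; rewrite /upd; case: eqP => [[->]|_]. Qed.

End latches.

Lemma latch_depth_upd_new v m k x : latches_below v -> (k <= m)%N ->
  latch_depth (upd v m.+1 (existT _ k x)) m.+1 = latch_depth v k + D' k (h k) x.
Proof.
move=> v_below km; rewrite /= {2}/upd eqxx.
rewrite depth_existT; last exact: latches_below_upd.
by rewrite latch_depth_upd // addrC.
Qed.

Lemma Ssum_gt0 m : 0 < Ssum W m.
Proof.
rewrite /Ssum big_ord_recl /=; apply: (lt_le_trans W0_gt0).
by rewrite lerDl; apply: sumr_ge0.
Qed.

Lemma weight_ge0 k m : 0 <= W k / Ssum W m.
Proof. by rewrite divr_ge0 // ltW // Ssum_gt0. Qed.

Lemma weight_le1 k : W k / Ssum W k <= 1.
Proof.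
rewrite ler_pdivrMr ?Ssum_gt0 // mul1r /Ssum big_ord_recr /= lerDr.
exact: sumr_ge0.
Qed.

Lemma weight00 : W 0%N / Ssum W 0 = 1.
Proof. by rewrite /Ssum big_ord1 divff // gt_eqF. Qed.

Lemma sum_weights m : \sum_(k < m.+1) W k / Ssum W m = 1.
Proof. by rewrite -mulr_suml divff // gt_eqF // Ssum_gt0. Qed.

Lemma weightS k m :
  W k / Ssum W m.+1 = W k / Ssum W m * (1 - W m.+1 / Ssum W m.+1).
Proof.
have SmS : Ssum W m.+1 = Ssum W m + W m.+1 by rewrite /Ssum big_ord_recr.
have S0 := Ssum_gt0 m; have S1 := Ssum_gt0 m.+1.
rewrite SmS in S1 *; field.
by rewrite !gt_eqF.
Qed.

Local Open Scope ereal_scope.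

Lemma eq_mixInt m (G G' : pt T -> \bar R) :
  (forall (k : nat) (x : T k), (k <= m)%N ->
    G (existT _ k x) = G' (existT _ k x)) ->
  mixInt P' W m G = mixInt P' W m G'.
Proof.
move=> GG'; apply: eq_bigr => -[k km] _; congr (_ * _).
by apply: eq_integral => x _; exact: GG'.
Qed.

Lemma mixInt_cstD m (c : \bar R) (G : pt T -> \bar R) : 0 <= c ->
  (forall q, 0 <= G q) ->
  (forall k, measurable_fun setT (fun x : T k => G (existT _ k x))) ->
  mixInt P' W m (fun q => c + G q) = c + mixInt P' W m G.
Proof.
move=> c0 G0 mG; rewrite /mixInt.
transitivity (\sum_(k < m.+1) ((W k / Ssum W m)%:E * c +
    (W k / Ssum W m)%:E * \int[P' k]_x G (existT _ (k : nat) x))).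
  apply: eq_bigr => k _; rewrite -ge0_muleDr //; last exact: integral_ge0.
  by rewrite ge0_integralD // integral_cst // [X in c * X]probability_setT mule1.
rewrite big_split /= -ge0_sume_distrl; last first.
  by move=> k _; rewrite lee_fin weight_ge0.
by rewrite sumEFin sum_weights mul1e.
Qed.

Lemma mixInt_shift m (g : R -> \bar R) (c : nat -> R) :
  measurable_fun setT g -> (forall x, 0 <= g x) ->
  mixInt P' W m (fun q => g (c (projT1 q) + D' _ (h _) (projT2 q))%R) =
  \sum_(k < m.+1) (W k / Ssum W m)%:E * shift_integral (nu k) g (c k).
Proof.
move=> mg g0; apply: eq_bigr => k _; congr (_ * _).
rewrite /shift_integral ge0_integral_law //.
by apply: (measurableT_comp mg); exact: measurable_funD.
Qed.

Local Notation chain := (bconv_chain (fun k => W k / Ssum W k)%R (fun k => nu k)).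

Lemma latchIntS r m F v : latchInt P' W r.+1 m F v =
  mixInt P' W m (fun q => latchInt P' W r m.+1 F (upd v m.+1 q)).
Proof. by []. Qed.

Lemma latchInt_latch_depth (f : R -> \bar R) :
  measurable_fun setT f -> (forall x, 0 <= f x) ->
  forall r m v, latches_below v ->
  latchInt P' W r.+1 m (fun u => f (latch_depth u (r + m).+1)) v =
  \sum_(k < m.+1) (W k / Ssum W m)%:E *
    shift_integral (nu k) (chain m.+1 r f) (latch_depth v k).
Proof.
move=> mf f0; elim=> [|r IH] m v v_below; rewrite latchIntS.
  rewrite (eq_mixInt _ _ (fun q =>
    f (latch_depth v (projT1 q) + D' _ (h _) (projT2 q))%R)); last first.
    by move=> k x km /=; rewrite -(latch_depth_upd_new _ _ _ x v_below km).
  exact: mixInt_shift.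
have pW_ge0 k := weight_ge0 k k.
have pW_le1 k := weight_le1 k.
set Q := chain m.+2 r f.
have mQ : measurable_fun setT Q by exact: measurable_bconv_chain.
have Q0 : forall x, 0 <= Q x by exact: bconv_chain_ge0.
set C := \sum_(i < m.+1) (W i / Ssum W m.+1)%:E *
  shift_integral (nu i) Q (latch_depth v i).
set g := fun c => (W m.+1 / Ssum W m.+1)%:E * shift_integral (nu m.+1) Q c.
have mg : measurable_fun setT g.
  by apply: measurable_funeM; exact: measurable_shift_integral.
have g0 x : 0 <= g x.
  by apply: mule_ge0; [rewrite lee_fin | exact: shift_integral_ge0].
rewrite (eq_mixInt _ _ (fun q =>
    C + g (latch_depth v (projT1 q) + D' _ (h _) (projT2 q))%R)); last first.
  move=> k x km.
  have := IH m.+1 _ (latches_below_upd _ v_below _ (existT _ k x) km).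
  rewrite addnS => ->; rewrite big_ord_recr; congr (_ + _).
    apply: eq_bigr => i _; congr (_ * shift_integral _ _ _).
    by rewrite latch_depth_upd //; exact: ltn_ord i.
  rewrite /g; congr (_ * shift_integral _ _ _).
  exact: latch_depth_upd_new _ _ _ x v_below km.
rewrite mixInt_cstD //; last 2 first.
- by rewrite /C; apply: sume_ge0 => i _; apply: mule_ge0;
    [rewrite lee_fin weight_ge0 | exact: shift_integral_ge0].
- move=> k /=; apply: (measurableT_comp mg).
  exact: measurable_funD (measurable_cst _) (mD' k).
rewrite mixInt_shift // /C -big_split; apply: eq_bigr => k _ /=.
rewrite shift_integral_bconv // [RHS]ge0_muleDr; last 2 first.
- by apply: mule_ge0; [rewrite lee_fin subr_ge0 | exact: shift_integral_ge0].
- exact: shift_integral_ge0.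
by rewrite muleA -EFinM -weightS.
Qed.

Lemma insertion_depth_probE n (A : set R) : (0 < n)%N -> measurable A ->
  insertion_depth_prob D' h P' W n A = chain 0 n (fun c => (\1_A c)%:E) 0%R.
Proof.
case: n => [//|r] _ mA.
have := latchInt_latch_depth (fun c => (\1_A c)%:E) _ _ r 0 (v_init h)
  (fun k => leq0n k).
rewrite addn0 /insertion_depth_prob => ->; last 2 first.
- by apply/measurable_EFinP; exact: measurable_indic.
- by move=> x; rewrite lee_fin.
by rewrite big_ord1 /= /bconv weight00 subrr mul0e add0e.
Qed.

End insertion_depth.

Theorem lemma3p1 (R : realType) (d : nat -> measure_display)
  (T : forall k, measurableType (d k))
  (D' : forall k, T k -> T k -> R) (h : forall k, T k)
  (P' : forall k, probability (T k) R) (W : nat -> R)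
  (* each block is a metric space ... *)
  (HD0 : forall k (x y : T k), D' k x y = 0 <-> x = y)
  (HDsym : forall k (x y : T k), D' k x y = D' k y x)
  (HDtri : forall k (x y z : T k), D' k x z <= D' k x y + D' k y z)
  (* ... whose probability measure has full support ... *)
  (Hsupp : forall k (x : T k) (r : R), 0 < r -> (0 < P' k [set y | (D' k x y < r)%R])%E)
  (* ... and distance to the hook is measurable (Borel) *)
  (Hmeas : forall k, measurable_fun setT (D' k (h k)))
  (HW : forall k, 0 <= W k) (HW0 : 0 < W 0%N)
  (n : nat) (Hn : (1 <= n)%N)
  (dO : measure_display) (O : measurableType dO) (P : probability O R)
  (J Dl : nat -> O -> R)
  (HJm : forall k, measurable_fun setT (J k))
  (HDlm : forall k, measurable_fun setT (Dl k))
  (Hind : mutually_independent2 P n J Dl)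
  (HJ1 : forall k, (k < n)%N -> P (J k @^-1` [set 1]) = (W k / Ssum W k)%:E)
  (HJ0 : forall k, (k < n)%N -> P (J k @^-1` [set 0]) = (1 - W k / Ssum W k)%:E)
  (HDl : forall k, (k < n)%N -> forall A : set R, measurable A ->
      P (Dl k @^-1` A) = P' k (D' k (h k) @^-1` A)) :
  forall A : set R, measurable A ->
    P [set w | \sum_(k < n) (J k w * Dl k w) \in A] =
    insertion_depth_prob D' h P' W n A.
Proof.
move=> A mA.
have pW_ge0 k : 0 <= W k / Ssum W k by exact: weight_ge0.
have pW_le1 k : W k / Ssum W k <= 1 by exact: weight_le1.
rewrite (probability_psum_in _ _ _ _ _ (fun k => law (P' k) (Hmeas k))
  HJm HDlm Hind pW_ge0 pW_le1 HJ1 HJ0 HDl _ mA).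
by rewrite insertion_depth_probE.
Qed.
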